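(* Let $n\ge3$, $\alpha<1$, $q\in[1,\infty)$, $r,s\in[0,1)$, and for $\beta\in[0,\pi]$ set $$\mathcal{J}(\alpha,\beta,q,r,s)=\int_{-\pi}^{\pi}\big(1+s^2-2rs\cos\theta\big)^{\frac{(n-\alpha)q}{2}-n+1}|\cos(\theta-\beta)|^q\,d\theta.$$ (1) If $q=\frac{2n-2}{n-\alpha}$ or $q=\frac{2n}{n-\alpha}$, then $\beta\mapsto\mathcal{J}(\alpha,\beta,q,r,s)$ is constant on $[0,\pi]$. (2) If $\frac{2n-2}{n-\alpha}<q<\frac{2n}{n-\alpha}$, then $\beta\mapsto\mathcal{J}(\alpha,\beta,q,r,s)$ is increasing on $[0,\frac\pi2]$ and $\max_{\beta\in[0,\pi]}\mathcal{J}(\alpha,\beta,q,r,s)=\mathcal{J}(\alpha,\frac\pi2,q,r,s)$. (3) If $q>\frac{2n}{n-\alpha}$ or $1\le q<\frac{2n-2}{n-\alpha}$, then $\beta\mapsto\mathcal{J}(\alpha,\beta,q,r,s)$ is decreasing on $[0,\frac\pi2]$ and $\max_{\beta\in[0,\pi]}\mathcal{J}(\alpha,\beta,q,r,s)=\mathcal{J}(\alpha,0,q,r,s)$. *)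

From Stdlib Require Import Reals.
From Coquelicot Require Import Coquelicot.
Open Scope R_scope.

(* x^y for x >= 0 and real y, with the convention 0^y = 0 (used only for y >= 1 > 0). *)
Definition rpow (x y : R) : R := if Rle_dec x 0 then 0 else Rpower x y.

Definition Jint (n : nat) (alpha beta q r s : R) : R :=
  RInt (fun theta =>
          rpow (1 + s ^ 2 - 2 * r * s * cos theta)
               ((INR n - alpha) * q / 2 - INR n + 1)
          * rpow (Rabs (cos (theta - beta))) q)
       (- PI) PI.

From Stdlib Require Import Reals Lra Psatz.
From Coquelicot Require Import Coquelicot.
Open Scope R_scope.

(* Write A = 1 + s^2, B = 2 r s and gamma = (n - alpha) q / 2 - n + 1, so that the
   weight is w(t) = (A - B cos t)^gamma.  Since w is 2 pi-periodic and |cos|^q is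
   pi-periodic and even, J(beta) is the integral over any window of length pi of
   Phi(|cos t|) |cos (t - beta)|^q with Phi(y) = (A - B y)^gamma + (A + B y)^gamma.
   Reflecting the window about (b1 + b2) / 2 gives
     2 (J b2 - J b1) = int (Phi |cos t| - Phi |cos (b1 + b2 - t)|)
                           (|cos (t - b2)|^q - |cos (t - b1)|^q),
   whose integrand has a constant sign when Phi is monotone on [0, 1] and
   0 <= b1 <= b2 <= pi / 2.  By the mean value theorem Phi is constant for
   gamma in {0, 1}, nonincreasing for 0 < gamma < 1 and nondecreasing otherwise,
   and gamma is affine in q with gamma = 0, 1 exactly at q = (2n-2)/(n-alpha),
   2n/(n-alpha).  The symmetry J(pi - beta) = J(beta) then locates the maximum. *)


Definition continuous_everywhere (f : R -> R) := forall x, continuous f x.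

Create HintDb continuous_everywhere.

Lemma ex_RInt_continuous_everywhere f a b : continuous_everywhere f -> ex_RInt f a b.
Proof. intro hf; apply (ex_RInt_continuous (V := R_CompleteNormedModule)); intros; apply hf. Qed.

Lemma continuous_everywhere_const c : continuous_everywhere (fun _ => c).
Proof. intro; apply continuous_const. Qed.

Lemma continuous_everywhere_plus f g :
  continuous_everywhere f -> continuous_everywhere g -> continuous_everywhere (fun x => f x + g x).
Proof. intros hf hg x; apply (continuous_plus f g); auto. Qed.

Lemma continuous_everywhere_minus f g :
  continuous_everywhere f -> continuous_everywhere g -> continuous_everywhere (fun x => f x - g x).
Proof. intros hf hg x; apply (continuous_minus f g); auto. Qed.

Lemma continuous_everywhere_mult f g :
  continuous_everywhere f -> continuous_everywhere g -> continuous_everywhere (fun x => f x * g x).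
Proof. intros hf hg x; apply (continuous_mult f g); auto. Qed.

Lemma continuous_everywhere_affine f u v :
  continuous_everywhere f -> continuous_everywhere (fun x => f (u * x + v)).
Proof.
  intros hf x. apply (continuous_comp (fun x => u * x + v) f); [|apply hf].
  apply (continuous_plus (fun x => u * x) (fun _ => v)); [|apply continuous_const].
  apply (continuous_mult (fun _ => u) (fun x => x)); [apply continuous_const|apply continuous_id].
Qed.

Lemma continuous_everywhere_shift f c :
  continuous_everywhere f -> continuous_everywhere (fun x => f (x + c)).
Proof.
  intros hf x. apply (continuous_ext (fun x => f (1 * x + c))).
  - intro; rewrite Rmult_1_l; reflexivity.
  - now apply continuous_everywhere_affine.
Qed.

Lemma continuous_everywhere_shift_minus f c :
  continuous_everywhere f -> continuous_everywhere (fun x => f (x - c)).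
Proof. exact (continuous_everywhere_shift f (- c)). Qed.

Lemma continuous_everywhere_reflect f c :
  continuous_everywhere f -> continuous_everywhere (fun x => f (c - x)).
Proof.
  intros hf x. apply (continuous_ext (fun x => f (-1 * x + c))).
  - intro y; f_equal; ring.
  - now apply continuous_everywhere_affine.
Qed.

Lemma continuous_everywhere_cos : continuous_everywhere cos.
Proof. exact continuous_cos. Qed.

#[local] Hint Resolve continuous_everywhere_cos ex_RInt_continuous_everywhere continuous_everywhere_const
  continuous_everywhere_plus continuous_everywhere_minus continuous_everywhere_mult
  continuous_everywhere_shift continuous_everywhere_shift_minus
  continuous_everywhere_reflect : continuous_everywhere.

Lemma RInt_ext_R (f g : R -> R) a b : (forall x, f x = g x) -> RInt f a b = RInt g a b.
Proof. intro e; apply RInt_ext; intros; apply e. Qed.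

Section RIntLinear.
Variables (f g : R -> R) (a b : R).
Hypotheses (hf : continuous_everywhere f) (hg : continuous_everywhere g).

Lemma RInt_plus_R : RInt (fun x => f x + g x) a b = RInt f a b + RInt g a b.
Proof. apply (RInt_plus (V := R_CompleteNormedModule)); auto with continuous_everywhere. Qed.

Lemma RInt_minus_R : RInt (fun x => f x - g x) a b = RInt f a b - RInt g a b.
Proof. apply (RInt_minus (V := R_CompleteNormedModule)); auto with continuous_everywhere. Qed.

Lemma RInt_swap_R : RInt f b a = - RInt f a b.
Proof. symmetry; apply (opp_RInt_swap (V := R_CompleteNormedModule)); auto with continuous_everywhere. Qed.

Lemma RInt_Chasles_R c : RInt f a c + RInt f c b = RInt f a b.
Proof. apply (RInt_Chasles (V := R_CompleteNormedModule)); auto with continuous_everywhere. Qed.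

End RIntLinear.

Lemma RInt_affine f u v a b : continuous_everywhere f ->
  RInt (fun x => u * f (u * x + v)) a b = RInt f (u * a + v) (u * b + v).
Proof. intro hf; apply (RInt_comp_lin f); auto with continuous_everywhere. Qed.

Lemma RInt_shift f c a b : continuous_everywhere f ->
  RInt (fun x => f (x + c)) a b = RInt f (a + c) (b + c).
Proof.
  intro hf. transitivity (RInt (fun x => 1 * f (1 * x + c)) a b).
  - apply RInt_ext_R; intro x; rewrite !Rmult_1_l; reflexivity.
  - rewrite RInt_affine by exact hf; f_equal; ring.
Qed.

Lemma RInt_reflect f c a b : continuous_everywhere f ->
  RInt (fun x => f (c - x)) a b = RInt f (c - b) (c - a).
Proof.
  intro hf. rewrite (RInt_swap_R f) by exact hf.
  transitivity (- RInt (fun x => -1 * f (-1 * x + c)) a b).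
  - rewrite <- (RInt_opp (V := R_CompleteNormedModule)) by
      (apply ex_RInt_continuous_everywhere, continuous_everywhere_mult;
       auto using continuous_everywhere_const, continuous_everywhere_affine).
    apply RInt_ext_R; intro x; unfold opp; simpl.
    replace (-1 * x + c) with (c - x) by ring; ring.
  - rewrite RInt_affine by exact hf; f_equal; f_equal; ring.
Qed.

Lemma RInt_translate_period f T c : continuous_everywhere f -> (forall x, f (x + T) = f x) ->
  RInt f c (c + T) = RInt f 0 T.
Proof.
  intros hf hT.
  assert (tail : RInt f T (c + T) = RInt f 0 c).
  { replace T with (0 + T) at 1 by ring.
    rewrite <- RInt_shift by exact hf. apply RInt_ext_R, hT. }
  rewrite <- (RInt_Chasles_R f c (c + T) hf T), <- (RInt_Chasles_R f c T hf 0), tail.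
  rewrite (RInt_swap_R f 0 c) by exact hf. lra.
Qed.

Lemma RInt_split_half f a T : continuous_everywhere f ->
  RInt f a (a + 2 * T) = RInt (fun x => f x + f (x + T)) a (a + T).
Proof.
  intro hf.
  rewrite <- (RInt_Chasles_R f a (a + 2 * T) hf (a + T)), RInt_plus_R, RInt_shift
    by auto with continuous_everywhere.
  do 2 f_equal; ring.
Qed.

Section Folding.
Variables w g : R -> R.
Hypotheses (hw : continuous_everywhere w) (hg : continuous_everywhere g).
Hypotheses (w_period : forall x, w (x + 2 * PI) = w x) (g_period : forall x, g (x + PI) = g x).
Hypothesis g_even : forall x, g (- x) = g x.

Let G t := w t + w (t + PI).

Lemma RInt_fold_weight b m :
  RInt (fun t => w t * g (t - b)) (- PI) PI
  = RInt (fun t => G t * g (t - b)) (m - PI / 2) (m + PI / 2).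
Proof.
  assert (hG : continuous_everywhere (fun t => G t * g (t - b)))
    by (unfold G; auto with continuous_everywhere).
  assert (G_period : forall x, G (x + PI) * g (x + PI - b) = G x * g (x - b)).
  { intro x. unfold G. replace (x + PI + PI) with (x + 2 * PI) by ring.
    replace (x + PI - b) with (x - b + PI) by ring. rewrite w_period, g_period. ring. }
  replace PI with (- PI + 2 * PI) at 2 by ring.
  rewrite RInt_split_half by auto with continuous_everywhere.
  rewrite (RInt_ext_R _ (fun t => G t * g (t - b))).
  2:{ intro x. unfold G. replace (x + PI - b) with (x - b + PI) by ring.
      rewrite g_period. ring. }
  replace (m + PI / 2) with (m - PI / 2 + PI) by field.
  rewrite !RInt_translate_period by assumption. reflexivity.
Qed.

Lemma RInt_weight_difference b1 b2 :
  2 * (RInt (fun t => w t * g (t - b2)) (- PI) PI - RInt (fun t => w t * g (t - b1)) (- PI) PI)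
  = RInt (fun t => (G t - G (b1 + b2 - t)) * (g (t - b2) - g (t - b1)))
      ((b1 + b2) / 2 - PI / 2) ((b1 + b2) / 2 + PI / 2).
Proof.
  set (m := (b1 + b2) / 2).
  assert (hG : continuous_everywhere G) by (unfold G; auto with continuous_everywhere).
  (* the reflection t |-> b1 + b2 - t fixes the window and, g being even, swaps b1 and b2 *)
  assert (reflect : forall bi bj, bi + bj = b1 + b2 ->
    RInt (fun t => G t * g (t - bi)) (m - PI / 2) (m + PI / 2)
    = RInt (fun t => G (b1 + b2 - t) * g (t - bj)) (m - PI / 2) (m + PI / 2)).
  { intros bi bj hij.
    transitivity (RInt (fun t => G (b1 + b2 - t) * g (b1 + b2 - t - bi)) (m - PI / 2) (m + PI / 2)).
    - rewrite (RInt_reflect (fun t => G t * g (t - bi))) by auto with continuous_everywhere.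
      f_equal; unfold m; field.
    - apply RInt_ext_R; intro x. rewrite <- g_even. do 2 f_equal. lra. }
  rewrite !(RInt_fold_weight _ m).
  rewrite (RInt_ext_R (fun t => (G t - G (b1 + b2 - t)) * (g (t - b2) - g (t - b1)))
      (fun t => (G t * g (t - b2) - G t * g (t - b1))
              - (G (b1 + b2 - t) * g (t - b2) - G (b1 + b2 - t) * g (t - b1))))
    by (intro; ring).
  rewrite !RInt_minus_R by auto with continuous_everywhere.
  rewrite <- (reflect b2 b1), <- (reflect b1 b2) by ring.
  lra.
Qed.

End Folding.

Lemma cos_sq_sub_cos_sq m u : cos (m - u) ^ 2 - cos (m + u) ^ 2 = sin (2 * m) * sin (2 * u).
Proof. rewrite cos_minus, cos_plus, !sin_2a. ring. Qed.

Lemma Rabs_cos_bound x : 0 <= Rabs (cos x) <= 1.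
Proof. split; [apply Rabs_pos|]. destruct (COS_bound x). apply Rabs_le; lra. Qed.

Lemma Rabs_le_of_sq_le a b : a ^ 2 <= b ^ 2 -> Rabs a <= Rabs b.
Proof. rewrite <- !Rsqr_pow2. apply Rsqr_le_abs_0. Qed.

(* Both factors have the sign of sin (2 t - b1 - b2): by cos_sq_sub_cos_sq,
   cos (b1 + b2 - t)^2 - cos t^2 = sin (b1 + b2) sin (2 t - b1 - b2) and
   cos (t - b2)^2 - cos (t - b1)^2 = sin (2 t - b1 - b2) sin (b2 - b1). *)
Lemma fold_integrand_nonneg (P Q : R -> R)
  (P_anti : forall y1 y2, 0 <= y1 <= y2 -> y2 <= 1 -> P y2 <= P y1)
  (Q_mono : forall y1 y2, 0 <= y1 <= y2 -> y2 <= 1 -> Q y1 <= Q y2)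
  b1 b2 t : 0 <= b1 -> b1 <= b2 -> b2 <= PI / 2 ->
  0 <= (P (Rabs (cos t)) - P (Rabs (cos (b1 + b2 - t))))
       * (Q (Rabs (cos (t - b2))) - Q (Rabs (cos (t - b1)))).
Proof.
  intros h1 h2 h3.
  set (m := (b1 + b2) / 2); set (u := t - m); set (d := (b2 - b1) / 2).
  pose proof PI_RGT_0.
  assert (sin_m : 0 <= sin (2 * m)) by (apply sin_ge_0; unfold m; lra).
  assert (sin_d : 0 <= sin (2 * d)) by (apply sin_ge_0; unfold d; lra).
  assert (E1 : cos (b1 + b2 - t) ^ 2 - cos t ^ 2 = sin (2 * m) * sin (2 * u)).
  { rewrite <- cos_sq_sub_cos_sq. unfold u, m. f_equal; f_equal; f_equal; field. }
  assert (E2 : cos (t - b2) ^ 2 - cos (t - b1) ^ 2 = sin (2 * u) * sin (2 * d)).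
  { rewrite <- cos_sq_sub_cos_sq. unfold u, m, d. f_equal; f_equal; f_equal; field. }
  pose proof (Rabs_cos_bound t); pose proof (Rabs_cos_bound (b1 + b2 - t)).
  pose proof (Rabs_cos_bound (t - b2)); pose proof (Rabs_cos_bound (t - b1)).
  destruct (Rle_or_lt 0 (sin (2 * u))) as [su|su].
  - assert (P (Rabs (cos (b1 + b2 - t))) <= P (Rabs (cos t)))
      by (apply P_anti; [split; [lra | apply Rabs_le_of_sq_le; nra] | lra]).
    assert (Q (Rabs (cos (t - b1))) <= Q (Rabs (cos (t - b2))))
      by (apply Q_mono; [split; [lra | apply Rabs_le_of_sq_le; nra] | lra]).
    nra.
  - assert (P (Rabs (cos t)) <= P (Rabs (cos (b1 + b2 - t))))
      by (apply P_anti; [split; [lra | apply Rabs_le_of_sq_le; nra] | lra]).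
    assert (Q (Rabs (cos (t - b2))) <= Q (Rabs (cos (t - b1))))
      by (apply Q_mono; [split; [lra | apply Rabs_le_of_sq_le; nra] | lra]).
    nra.
Qed.

Lemma exp_le_exp x y : x <= y -> exp x <= exp y.
Proof. intros [h | ->]; [left; now apply exp_increasing | right; reflexivity]. Qed.

Lemma Rle_Rpower_l_nonpos a b e : e <= 0 -> 0 < a <= b -> Rpower b e <= Rpower a e.
Proof.
  intros he [ha hab]. apply exp_le_exp.
  assert (ln a <= ln b) by (apply ln_le; lra). nra.
Qed.

Definition sym_pow_sum (A B ga y : R) := Rpower (A - B * y) ga + Rpower (A + B * y) ga.

Lemma is_derive_Rpower_affine A K ga y : 0 < A + K * y ->
  is_derive (fun y => Rpower (A + K * y) ga) y (K * (ga * Rpower (A + K * y) (ga - 1))).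
Proof.
  intro h. apply (is_derive_comp (fun z => Rpower z ga) (fun y => A + K * y)).
  - apply is_derive_Reals. now apply derivable_pt_lim_power.
  - auto_derive; [exact I | ring].
Qed.

Section SymPowSum.
Variables A B ga : R.
Hypotheses (B_ge0 : 0 <= B) (B_lt_A : B < A).

Lemma sym_pow_sum_bases_pos y : 0 <= y <= 1 -> 0 < A - B * y /\ 0 < A + B * y.
Proof. intro; split; nra. Qed.

Lemma is_derive_sym_pow_sum y : 0 <= y <= 1 ->
  is_derive (sym_pow_sum A B ga) y
    (ga * B * (Rpower (A + B * y) (ga - 1) - Rpower (A - B * y) (ga - 1))).
Proof.
  intro hy. destruct (sym_pow_sum_bases_pos y hy) as [hm hp].
  assert (dm := is_derive_Rpower_affine A (- B) ga y ltac:(lra)).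
  assert (d := is_derive_plus _ _ y _ _ dm (is_derive_Rpower_affine A B ga y hp)).
  replace (A + - B * y) with (A - B * y) in d by ring.
  replace (ga * B * (Rpower (A + B * y) (ga - 1) - Rpower (A - B * y) (ga - 1))) with
    (plus (- B * (ga * Rpower (A - B * y) (ga - 1))) (B * (ga * Rpower (A + B * y) (ga - 1))))
    by (unfold plus; simpl; ring).
  eapply is_derive_ext; [intro t | exact d].
  unfold sym_pow_sum, plus; simpl. rewrite <- Ropp_mult_distr_l. reflexivity.
Qed.

Lemma sym_pow_sum_MVT y1 y2 : 0 <= y1 <= y2 -> y2 <= 1 ->
  exists c, 0 <= c <= 1 /\ sym_pow_sum A B ga y2 - sym_pow_sum A B ga y1 =
    ga * B * (Rpower (A + B * c) (ga - 1) - Rpower (A - B * c) (ga - 1)) * (y2 - y1).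
Proof.
  intros hy hy2.
  destruct (MVT_gen (sym_pow_sum A B ga) y1 y2
     (fun c => ga * B * (Rpower (A + B * c) (ga - 1) - Rpower (A - B * c) (ga - 1))))
    as [c [hc e]]; rewrite Rmin_left, Rmax_right in * by lra.
  - intros x hx. apply is_derive_sym_pow_sum. lra.
  - intros x hx. apply continuity_pt_filterlim, (ex_derive_continuous (V := R_NormedModule)).
    eexists. apply is_derive_sym_pow_sum. lra.
  - exists c. split; [lra | exact e].
Qed.

Lemma sym_pow_sum_const : ga = 0 \/ ga = 1 -> forall y1 y2, 0 <= y1 <= 1 -> 0 <= y2 <= 1 ->
  sym_pow_sum A B ga y1 = sym_pow_sum A B ga y2.
Proof.
  intros hga y1 y2 hy1 hy2. unfold sym_pow_sum.
  destruct (sym_pow_sum_bases_pos y1 hy1), (sym_pow_sum_bases_pos y2 hy2).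
  destruct hga as [-> | ->].
  - rewrite !Rpower_O by assumption. reflexivity.
  - rewrite !Rpower_1 by assumption. ring.
Qed.

Lemma sym_pow_sum_nonincreasing : 0 < ga < 1 ->
  forall y1 y2, 0 <= y1 <= y2 -> y2 <= 1 -> sym_pow_sum A B ga y2 <= sym_pow_sum A B ga y1.
Proof.
  intros hga y1 y2 hy hy2. destruct (sym_pow_sum_MVT y1 y2 hy hy2) as [c [hc e]].
  assert (Rpower (A + B * c) (ga - 1) <= Rpower (A - B * c) (ga - 1))
    by (apply Rle_Rpower_l_nonpos; nra).
  assert (0 <= ga * B) by nra.
  assert (ga * B * (Rpower (A + B * c) (ga - 1) - Rpower (A - B * c) (ga - 1)) <= 0) by nra.
  nra.
Qed.

Lemma sym_pow_sum_nondecreasing : ga < 0 \/ 1 < ga ->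
  forall y1 y2, 0 <= y1 <= y2 -> y2 <= 1 -> sym_pow_sum A B ga y1 <= sym_pow_sum A B ga y2.
Proof.
  intros hga y1 y2 hy hy2. destruct (sym_pow_sum_MVT y1 y2 hy hy2) as [c [hc e]].
  destruct hga as [hga | hga].
  - assert (Rpower (A + B * c) (ga - 1) <= Rpower (A - B * c) (ga - 1))
      by (apply Rle_Rpower_l_nonpos; nra).
    assert (ga * B <= 0) by nra.
    assert (0 <= ga * B * (Rpower (A + B * c) (ga - 1) - Rpower (A - B * c) (ga - 1))) by nra.
    nra.
  - assert (Rpower (A - B * c) (ga - 1) <= Rpower (A + B * c) (ga - 1))
      by (apply Rle_Rpower_l; nra).
    assert (0 <= ga * B) by nra.
    assert (0 <= ga * B * (Rpower (A + B * c) (ga - 1) - Rpower (A - B * c) (ga - 1))) by nra.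
    nra.
Qed.

End SymPowSum.

Lemma rpow_pos_base x y : 0 < x -> rpow x y = Rpower x y.
Proof. intro hx; unfold rpow; destruct (Rle_dec x 0); [lra | reflexivity]. Qed.

Lemma rpow_nonneg x y : 0 <= rpow x y.
Proof. unfold rpow; destruct (Rle_dec x 0); [lra | left; apply exp_pos]. Qed.

Lemma rpow_le_rpow_l q y1 y2 : 0 <= q -> 0 <= y1 <= y2 -> rpow y1 q <= rpow y2 q.
Proof.
  intros hq hy. unfold rpow at 1. destruct (Rle_dec y1 0); [apply rpow_nonneg |].
  rewrite rpow_pos_base by lra. apply Rle_Rpower_l; lra.
Qed.

Lemma rpow_le_Rabs q y : 1 <= q -> y <= 1 -> rpow y q <= Rabs y.
Proof.
  intros hq hy. unfold rpow. destruct (Rle_dec y 0); [apply Rabs_pos |].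
  rewrite Rabs_pos_eq by lra. unfold Rpower. rewrite <- (exp_ln y) at 2 by lra.
  apply exp_le_exp. assert (ln y <= 0) by (rewrite <- ln_1; apply ln_le; lra). nra.
Qed.

Lemma continuous_Rpower_l y x : 0 < x -> continuous (fun z => Rpower z y) x.
Proof.
  intro hx. apply continuity_pt_filterlim, derivable_continuous_pt.
  exists (y * Rpower x (y - 1)). now apply derivable_pt_lim_power.
Qed.

Lemma continuous_rpow_pos_base q x : 0 < x -> continuous (fun y => rpow y q) x.
Proof.
  intro hx. apply (continuous_ext_loc _ (fun z => Rpower z q)).
  - apply (locally_interval _ x 0 p_infty); [exact hx | exact I |].
    intros y hy _. symmetry. now apply rpow_pos_base.
  - now apply continuous_Rpower_l.
Qed.

Lemma continuous_rpow q x : 1 <= q -> continuous (fun y => rpow y q) x.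
Proof.
  intro hq. destruct (Rlt_le_dec 0 x) as [hx | hx]; [| destruct (Rlt_le_dec x 0) as [hx' | hx']].
  - now apply continuous_rpow_pos_base.
  - apply (continuous_ext_loc _ (fun _ => 0)).
    + apply (locally_interval _ x m_infty 0); [exact I | exact hx' |].
      intros y _ hy. unfold rpow. destruct (Rle_dec y 0); [reflexivity | simpl in hy; lra].
    + apply continuous_const.
  - replace x with 0 by lra.
    change (filterlim (fun y => rpow y q) (locally 0) (Rbar_locally (rpow 0 q))).
    replace (rpow 0 q) with 0 by (unfold rpow; destruct (Rle_dec 0 0); lra).
    apply (filterlim_le_le (fun _ => 0) _ Rabs).
    + apply (locally_interval _ 0 m_infty 1); [exact I | simpl; lra |].
      intros y _ hy. split; [apply rpow_nonneg | apply rpow_le_Rabs; simpl in hy; lra].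
    + apply filterlim_const.
    + pose proof (continuous_Rabs 0) as h. unfold continuous in h. rewrite Rabs_R0 in h. exact h.
Qed.

Lemma one_add_sq_sub_pos r s y : 0 <= r < 1 -> 0 <= s < 1 -> -1 <= y <= 1 ->
  0 < 1 + s ^ 2 - 2 * r * s * y.
Proof. intros hr hs hy. assert (0 <= r * s) by nra. assert (r * s * y <= r * s) by nra. nra. Qed.

Section Jint.
Variables (n : nat) (alpha q r s : R).
Hypotheses (hq : 1 <= q) (hr : 0 <= r < 1) (hs : 0 <= s < 1).

Let ga := (INR n - alpha) * q / 2 - INR n + 1.
Let w t := rpow (1 + s ^ 2 - 2 * r * s * cos t) ga.
Let g x := rpow (Rabs (cos x)) q.
Let Phi := sym_pow_sum (1 + s ^ 2) (2 * r * s) ga.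
Let J b := Jint n alpha b q r s.

Lemma weight_base_pos t : 0 < 1 + s ^ 2 - 2 * r * s * cos t.
Proof. apply one_add_sq_sub_pos; auto. apply COS_bound. Qed.

Lemma weight_fold t : w t + w (t + PI) = Phi (Rabs (cos t)).
Proof.
  unfold w, Phi, sym_pow_sum. rewrite neg_cos, !rpow_pos_base by
    (try rewrite <- neg_cos; apply weight_base_pos).
  destruct (Rle_or_lt 0 (cos t)) as [h | h];
    [rewrite Rabs_pos_eq by lra | rewrite Rabs_left by lra; rewrite Rplus_comm];
    f_equal; f_equal; ring.
Qed.

Lemma weight_continuous : continuous_everywhere w.
Proof.
  assert (base : continuous_everywhere (fun t => 1 + s ^ 2 - 2 * r * s * cos t))
    by auto with continuous_everywhere.
  intro x. apply (continuous_comp _ (fun z => rpow z ga)); [apply base |].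
  apply continuous_rpow_pos_base, weight_base_pos.
Qed.

Lemma cos_pow_continuous : continuous_everywhere g.
Proof.
  intro x. apply (continuous_comp (fun x => Rabs (cos x)) (fun y => rpow y q)).
  - apply continuous_Rabs_comp, continuous_cos.
  - now apply continuous_rpow.
Qed.

Lemma Jint_difference b1 b2 : 2 * (J b2 - J b1)
  = RInt (fun t => (Phi (Rabs (cos t)) - Phi (Rabs (cos (b1 + b2 - t)))) * (g (t - b2) - g (t - b1)))
      ((b1 + b2) / 2 - PI / 2) ((b1 + b2) / 2 + PI / 2).
Proof.
  etransitivity; [apply (RInt_weight_difference w g) |].
  - exact weight_continuous.
  - exact cos_pow_continuous.
  - intro x. unfold w. rewrite cos_plus, cos_2PI, sin_2PI. do 3 f_equal. ring.
  - intro x. unfold g. rewrite neg_cos, Rabs_Ropp. reflexivity.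
  - intro x. unfold g. rewrite cos_neg. reflexivity.
  - apply RInt_ext_R; intro t. rewrite !weight_fold. reflexivity.
Qed.

Lemma fold_coeffs : 0 <= 2 * r * s /\ 2 * r * s < 1 + s ^ 2.
Proof. split; nra. Qed.

Lemma fold_continuous : continuous_everywhere (fun t => Phi (Rabs (cos t))).
Proof.
  intro x. apply (continuous_ext (fun t => w t + w (t + PI))); [intro; apply weight_fold |].
  apply continuous_everywhere_plus; auto using continuous_everywhere_shift, weight_continuous.
Qed.

Lemma fold_integrand_continuous b1 b2 : continuous_everywhere
  (fun t => (Phi (Rabs (cos t)) - Phi (Rabs (cos (b1 + b2 - t)))) * (g (t - b2) - g (t - b1))).
Proof.
  pose proof fold_continuous. pose proof cos_pow_continuous.
  apply continuous_everywhere_mult; apply continuous_everywhere_minus; auto with continuous_everywhere.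
  exact (continuous_everywhere_reflect (fun t => Phi (Rabs (cos t))) (b1 + b2) fold_continuous).
Qed.

Lemma Jint_eq_of_fold_sym b1 b2 :
  (forall t, Phi (Rabs (cos t)) = Phi (Rabs (cos (b1 + b2 - t)))) -> J b1 = J b2.
Proof.
  intro hsym. assert (e := Jint_difference b1 b2).
  rewrite (RInt_ext_R _ (fun _ => 0)), RInt_const in e by (intro t; rewrite hsym; ring).
  assert (2 * (J b2 - J b1) = 0) by (rewrite e; apply Rmult_0_r).
  lra.
Qed.

Lemma Jint_reflect b : J (PI - b) = J b.
Proof.
  apply Jint_eq_of_fold_sym. intro t.
  replace (PI - b + b - t) with (PI - t) by ring.
  rewrite Rtrigo_facts.cos_pi_minus, Rabs_Ropp. reflexivity.
Qed.

Lemma Jint_const : ga = 0 \/ ga = 1 -> forall b1 b2, J b1 = J b2.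
Proof.
  intros hga b1 b2. destruct fold_coeffs.
  apply Jint_eq_of_fold_sym. intro t. apply sym_pow_sum_const; auto using Rabs_cos_bound.
Qed.

Lemma Jint_nondecreasing : 0 < ga < 1 ->
  forall b1 b2, 0 <= b1 -> b1 <= b2 -> b2 <= PI / 2 -> J b1 <= J b2.
Proof.
  intros hga b1 b2 h1 h2 h3. destruct fold_coeffs. pose proof PI_RGT_0.
  assert (0 <= 2 * (J b2 - J b1)); [| lra].
  rewrite Jint_difference. apply RInt_ge_0.
  - lra.
  - apply ex_RInt_continuous_everywhere, fold_integrand_continuous.
  - intros t _. apply (fold_integrand_nonneg Phi (fun y => rpow y q)); auto.
    + now apply sym_pow_sum_nonincreasing.
    + intros; apply rpow_le_rpow_l; lra.
Qed.

Lemma Jint_nonincreasing : ga < 0 \/ 1 < ga ->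
  forall b1 b2, 0 <= b1 -> b1 <= b2 -> b2 <= PI / 2 -> J b2 <= J b1.
Proof.
  intros hga b1 b2 h1 h2 h3. destruct fold_coeffs. pose proof PI_RGT_0.
  assert (2 * (J b2 - J b1) <= 0); [| lra].
  rewrite Jint_difference.
  apply (Rle_trans _ (RInt (fun _ => 0) ((b1 + b2) / 2 - PI / 2) ((b1 + b2) / 2 + PI / 2)));
    [| rewrite RInt_const; apply Req_le, Rmult_0_r].
  apply RInt_le.
  - lra.
  - apply ex_RInt_continuous_everywhere, fold_integrand_continuous.
  - apply ex_RInt_const.
  - intros t _.
    assert (0 <= (- Phi (Rabs (cos t)) - - Phi (Rabs (cos (b1 + b2 - t))))
                  * (g (t - b2) - g (t - b1))); [| lra].
    apply (fold_integrand_nonneg (fun y => - Phi y) (fun y => rpow y q)); auto.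
    + intros y1 y2 hy hy2. apply Ropp_le_contravar. now apply sym_pow_sum_nondecreasing.
    + intros; apply rpow_le_rpow_l; lra.
Qed.
End Jint.

Section ReflectionSymmetric.
Variable f : R -> R.
Hypothesis f_reflect : forall b, f (PI - b) = f b.

Lemma le_at_PI2_of_nondecreasing :
  (forall b1 b2, 0 <= b1 -> b1 <= b2 -> b2 <= PI / 2 -> f b1 <= f b2) ->
  forall b, 0 <= b <= PI -> f b <= f (PI / 2).
Proof.
  intros f_mono b hb. destruct (Rle_or_lt b (PI / 2)).
  - apply f_mono; lra.
  - rewrite <- f_reflect. apply f_mono; lra.
Qed.

Lemma le_at_0_of_nonincreasing :
  (forall b1 b2, 0 <= b1 -> b1 <= b2 -> b2 <= PI / 2 -> f b2 <= f b1) ->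
  forall b, 0 <= b <= PI -> f b <= f 0.
Proof.
  intros f_anti b hb. pose proof PI_RGT_0. destruct (Rle_or_lt b (PI / 2)).
  - apply f_anti; lra.
  - rewrite <- f_reflect. apply f_anti; lra.
Qed.

End ReflectionSymmetric.

Lemma exponent_vs_thresholds (N alpha q : R) : alpha < N ->
  (q = (2 * N - 2) / (N - alpha) -> (N - alpha) * q / 2 - N + 1 = 0) /\
  (q = 2 * N / (N - alpha) -> (N - alpha) * q / 2 - N + 1 = 1) /\
  ((2 * N - 2) / (N - alpha) < q < 2 * N / (N - alpha) -> 0 < (N - alpha) * q / 2 - N + 1 < 1) /\
  (2 * N / (N - alpha) < q \/ q < (2 * N - 2) / (N - alpha) ->
     (N - alpha) * q / 2 - N + 1 < 0 \/ 1 < (N - alpha) * q / 2 - N + 1).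
Proof.
  intro hN. set (d := (N - alpha) / 2). set (q1 := (2 * N - 2) / (N - alpha)).
  set (q2 := 2 * N / (N - alpha)).
  assert (hd : 0 < d) by (unfold d; lra).
  assert (e1 : (N - alpha) * q / 2 - N + 1 = d * (q - q1)) by (unfold d, q1; field; lra).
  assert (e2 : (N - alpha) * q / 2 - N + 1 = 1 + d * (q - q2)) by (unfold d, q2; field; lra).
  rewrite e1 at 1 3 5. rewrite e2.
  split; [| split; [| split]]; intro hq.
  - rewrite hq; ring.
  - rewrite hq; ring.
  - split; [apply Rmult_lt_0_compat; lra |].
    assert (d * (q - q2) < 0) by (apply Rmult_pos_neg; lra). lra.
  - destruct hq; [right | left].
    + assert (0 < d * (q - q2)) by (apply Rmult_lt_0_compat; lra). lra.
    + apply Rmult_pos_neg; lra.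
Qed.

Theorem corollary2p1 (n : nat) (alpha q r s : R)
  (hn : (3 <= n)%nat) (halpha : alpha < 1) (hq : 1 <= q)
  (hr : 0 <= r < 1) (hs : 0 <= s < 1) :
  let q1 := (2 * INR n - 2) / (INR n - alpha) in
  let q2 := 2 * INR n / (INR n - alpha) in
  let J := fun beta => Jint n alpha beta q r s in
  ((q = q1 \/ q = q2) ->
     forall b1 b2, 0 <= b1 <= PI -> 0 <= b2 <= PI -> J b1 = J b2)
  /\
  (q1 < q < q2 ->
     (forall b1 b2, 0 <= b1 -> b1 <= b2 -> b2 <= PI / 2 -> J b1 <= J b2)
     /\ (forall b, 0 <= b <= PI -> J b <= J (PI / 2)))
  /\
  ((q2 < q \/ q < q1) ->
     (forall b1 b2, 0 <= b1 -> b1 <= b2 -> b2 <= PI / 2 -> J b2 <= J b1)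
     /\ (forall b, 0 <= b <= PI -> J b <= J 0)).
Proof.
  intros q1 q2 J; unfold J.
  assert (hN : alpha < INR n) by (apply le_INR in hn; simpl in hn; lra).
  destruct (exponent_vs_thresholds (INR n) alpha q hN) as (ga0 & ga1 & ga_mid & ga_out).
  assert (reflect := Jint_reflect n alpha q r s hq hr hs).
  split; [| split].
  - intros hq12 b1 b2 _ _. apply (Jint_const n alpha q r s hq hr hs).
    destruct hq12; [left; now apply ga0 | right; now apply ga1].
  - intros hq12. assert (mono := Jint_nondecreasing n alpha q r s hq hr hs (ga_mid hq12)).
    split; [exact mono | exact (le_at_PI2_of_nondecreasing _ reflect mono)].
  - intros hq12. assert (anti := Jint_nonincreasing n alpha q r s hq hr hs (ga_out hq12)).
    split; [exact anti | exact (le_at_0_of_nonincreasing _ reflect anti)].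
Qed.
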